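(* Under the standing assumptions, let $H$ and $L$ be wide subgroupoids of $\mathcal G$ such that $J_h\neq\{0\}$ for every $h\in H$ and $J_l\neq\{0\}$ for every $l\in L$. If $R^{\beta_H}=R^{\beta_L}$, then $H=L$.
   Context: All rings and algebras are associative and unital. A groupoid is a nonempty set $\mathcal G$ with a partially defined associative multiplication in which every $g$ has an inverse $g^{-1}$, a left identity $r(g)=gg^{-1}$ and a right identity $d(g)=g^{-1}g$; $gh$ is defined iff $d(g)=r(h)$; $\mathcal G_0$ is the set of identities. A subgroupoid is a nonempty subset closed under inverses and defined products; it is wide if it contains $\mathcal G_0$. Standing assumptions: $K$ commutative ring, $R$ a $K$-algebra, $\mathcal G$ a finite groupoid, $\beta=(\{E_g\},\{\beta_g\})$ a unital action of $\mathcal G$ on $R$: $E_g=E_{r(g)}$ is an ideal of $R$, unital with identity $1_g$ (so $1_{g^{-1}}=1_{d(g)}$), $\beta_g:E_{g^{-1}}\to E_g$ a $K$-algebra isomorphism, $\beta_e=\mathrm{id}_{E_e}$ for $e\in\mathcal G_0$, $\beta_g\beta_h(x)=\beta_{gh}(x)$ whenever $d(g)=r(h)$, $x\in E_{h^{-1}}$; $R=\bigoplus_{e\in\mathcal G_0}E_e$; and $R$ is a $\beta$-Galois extension of $R^\beta$: there exist $x_i,y_i\in R$ ($1\le i\le m$) with $\sum_i x_i\beta_g(y_i1_{g^{-1}})=1_g$ if $g\in\mathcal G_0$ and $=0$ otherwise. For a subgroupoid $H$, $R^{\beta_H}=\{r\in R:\beta_h(r1_{h^{-1}})=r1_h\ \forall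 h\in H\}$, and $R^\beta=R^{\beta_{\mathcal G}}$. For $g\in\mathcal G$, $J_g=\{r\in E_g: r\beta_g(x1_{g^{-1}})=xr\ \forall x\in R\}$. *)

From HB Require Import structures.
From mathcomp Require Import all_boot all_algebra.
Set Implicit Arguments. Unset Strict Implicit. Unset Printing Implicit Defensive.
Import GRing.Theory.
Local Open Scope ring_scope.

(* A finite groupoid on the carrier G : finType, given by domain d, range r,
   inverse inv and a multiplication mul (total function, only meaningful
   when d g = r h, i.e. when gh is defined). *)
Definition is_groupoid (G : finType) (d r inv : G -> G) (mul : G -> G -> G) : Prop :=
  (forall g h, d g = r h -> d (mul g h) = d h /\ r (mul g h) = r g) /\
      (forall g h k, d g = r h -> d h = r k -> mul (mul g h) k = mul g (mul h k)) /\
      (forall g, d (d g) = d g /\ r (d g) = d g /\ d (r g) = r g /\ r (r g) = r g) /\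
      (forall g, mul (r g) g = g /\ mul g (d g) = g) /\
      (forall g, d (inv g) = r g /\ r (inv g) = d g) /\
      (forall g, mul g (inv g) = r g /\ mul (inv g) g = d g).

Definition gid (G : finType) (d : G -> G) : {set G} := [set e | d e == e].

Definition subgroupoid (G : finType) (d r inv : G -> G) (mul : G -> G -> G)
    (H : {set G}) : Prop :=
  [/\ H != set0,
      (forall h, h \in H -> inv h \in H) &
      (forall g h, g \in H -> h \in H -> d g = r h -> mul g h \in H)].

Definition wide_subgroupoid (G : finType) (d r inv : G -> G) (mul : G -> G -> G)
    (H : {set G}) : Prop :=
  subgroupoid d r inv mul H /\ gid d \subset H.

Definition is_ideal (R : pzRingType) (E : R -> Prop) : Prop :=
  [/\ E 0, (forall x y, E x -> E y -> E (x - y)) &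
      (forall a x, E x -> E (a * x) /\ E (x * a))].

(* unital action beta = ({E_g}, {beta_g}) of the groupoid on the K-algebra R,
   with 1_g = one g the identity of E_g, and R = (+)_{e in G_0} E_e *)
Definition unital_action (K : comPzRingType) (R : algType K) (G : finType)
    (d r inv : G -> G) (mul : G -> G -> G)
    (E : G -> R -> Prop) (one : G -> R) (beta : G -> R -> R) : Prop :=
  (forall g x, E g x <-> E (r g) x) /\
      (forall g, is_ideal (E g)) /\
      (forall g, E g (one g) /\ forall x, E g x -> one g * x = x /\ x * one g = x) /\
      (forall g,
         (forall x, E (inv g) x -> E g (beta g x)) /\
         (forall x y, E (inv g) x -> E (inv g) y -> beta g (x + y) = beta g x + beta g y) /\
         (forall x y, E (inv g) x -> E (inv g) y -> beta g (x * y) = beta g x * beta g y) /\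
         (forall (k : K) x, E (inv g) x -> beta g (k *: x) = k *: beta g x) /\
         (forall x y, E (inv g) x -> E (inv g) y -> beta g x = beta g y -> x = y) /\
         (forall y, E g y -> exists2 x, E (inv g) x & beta g x = y)) /\
      (forall e x, e \in gid d -> E e x -> beta e x = x) /\
      (forall g h x, d g = r h -> E (inv h) x -> beta g (beta h x) = beta (mul g h) x) /\
      ((forall x : R, exists f : G -> R,
          (forall e, e \in gid d -> E e (f e)) /\ x = \sum_(e in gid d) f e) /\
       (forall f : G -> R, (forall e, e \in gid d -> E e (f e)) ->
          \sum_(e in gid d) f e = 0 -> forall e, e \in gid d -> f e = 0)).

Definition galois_ext (K : comPzRingType) (R : algType K) (G : finType)
    (d inv : G -> G) (one : G -> R) (beta : G -> R -> R) : Prop :=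
  exists m (x y : 'I_m -> R), forall g,
    \sum_(i < m) x i * beta g (y i * one (inv g)) =
      (if g \in gid d then one g else 0).

Definition fixed_ring (K : comPzRingType) (R : algType K) (G : finType)
    (inv : G -> G) (one : G -> R) (beta : G -> R -> R) (H : {set G}) (a : R) : Prop :=
  forall h, h \in H -> beta h (a * one (inv h)) = a * one h.

Definition Jset (K : comPzRingType) (R : algType K) (G : finType)
    (inv : G -> G) (E : G -> R -> Prop) (one : G -> R) (beta : G -> R -> R)
    (g : G) (a : R) : Prop :=
  E g a /\ forall x : R, a * beta g (x * one (inv g)) = x * a.

From mathcomp Require Import all_boot all_algebra.
Set Implicit Arguments. Unset Strict Implicit. Unset Printing Implicit Defensive.
Import GRing.Theory.
Local Open Scope ring_scope.

(* For a subgroupoid S let tr_S(z) = sum_(h in S) beta_h(z 1_(h^-1)) be the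
   partial trace; reindexing the sum along left translation by h' in S shows
   that tr_S(z) lies in R^(beta_S).  Let (x_i, y_i) be a Galois coordinate
   system and c_i = tr_S(y_i).  If S is wide, sum_i x_i c_i = sum_(e in G_0) 1_e
   = 1; if l is not in S, then sum_i beta_l(x_i 1_(l^-1)) c_i = 0, because each
   term beta_l(..) beta_h(..) is beta_l of a Galois sum at l^-1 h, which is not
   an identity.  Now if R^(beta_S) is contained in R^(beta_T) and l in T \ S,
   every c_i is fixed by beta_l, and for a in J_l the defining relation of J_l
   gives a = a (sum_i beta_l(x_i 1_(l^-1)) c_i) 1_l = 0.  Hence T is contained
   in S, and applying this in both directions yields H = L. *)

Section Groupoid.
Variables (G : finType) (d r inv : G -> G) (mul : G -> G -> G).
Hypothesis groupoidG : is_groupoid d r inv mul.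

Lemma mul_d g h : d g = r h -> d (mul g h) = d h.
Proof. by case: groupoidG => dr _ /dr []. Qed.

Lemma mul_r g h : d g = r h -> r (mul g h) = r g.
Proof. by case: groupoidG => dr _ /dr []. Qed.

Lemma mulA g h k : d g = r h -> d h = r k -> mul (mul g h) k = mul g (mul h k).
Proof. by case: groupoidG => _ [assoc _]; apply: assoc. Qed.

Lemma d_r g : d (r g) = r g.
Proof. by case: groupoidG => _ [_ [/(_ g) [_ [_ [-> _]]] _]]. Qed.

Lemma r_d g : r (d g) = d g.
Proof. by case: groupoidG => _ [_ [/(_ g) [_ [-> _]] _]]. Qed.

Lemma mul_rg g : mul (r g) g = g.
Proof. by case: groupoidG => _ [_ [_ [/(_ g) [-> _] _]]]. Qed.

Lemma mul_gd g : mul g (d g) = g.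
Proof. by case: groupoidG => _ [_ [_ [/(_ g) [_ ->] _]]]. Qed.

Lemma d_inv g : d (inv g) = r g.
Proof. by case: groupoidG => _ [_ [_ [_ [/(_ g) [-> _] _]]]]. Qed.

Lemma r_inv g : r (inv g) = d g.
Proof. by case: groupoidG => _ [_ [_ [_ [/(_ g) [_ ->] _]]]]. Qed.

Lemma mulgV g : mul g (inv g) = r g.
Proof. by case: groupoidG => _ [_ [_ [_ [_ /(_ g) []]]]]. Qed.

Lemma mulVg g : mul (inv g) g = d g.
Proof. by case: groupoidG => _ [_ [_ [_ [_ /(_ g) []]]]]. Qed.

Lemma r_gid g : r g \in gid d.
Proof. by rewrite inE d_r. Qed.

Lemma gid_d e : e \in gid d -> d e = e.
Proof. by rewrite inE => /eqP. Qed.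

Lemma gid_r e : e \in gid d -> r e = e.
Proof. by move=> He; rewrite -{1}(gid_d He) r_d gid_d. Qed.

(* Left translation by g is a bijection from {h | r h = d g} onto
   {k | r k = r g}, with inverse the translation by g^-1. *)
Lemma mulKg g h : d g = r h -> mul (inv g) (mul g h) = h.
Proof. by move=> dgh; rewrite -mulA ?d_inv // mulVg dgh mul_rg. Qed.

Lemma mulKVg g k : r k = r g -> mul g (mul (inv g) k) = k.
Proof.
move=> rkg; have dk : d (inv g) = r k by rewrite d_inv rkg.
by rewrite -mulA ?r_inv // mulgV -rkg mul_rg.
Qed.

Lemma gid_cancel g h : r h = r g -> mul (inv g) h \in gid d -> h = g.
Proof.
move=> rhg hg; have dh : d (inv g) = r h by rewrite d_inv rhg.
by rewrite -(mulKVg rhg) -(gid_r hg) mul_r // r_inv mul_gd.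
Qed.

End Groupoid.

Section Action.
Variables (K : comPzRingType) (R : algType K) (G : finType).
Variables (d r inv : G -> G) (mul : G -> G -> G).
Variables (E : G -> R -> Prop) (one : G -> R) (beta : G -> R -> R).
Hypothesis groupoidG : is_groupoid d r inv mul.
Hypothesis action : unital_action d r inv mul E one beta.

Lemma E_r g u : E g u <-> E (r g) u.
Proof. by case: action => ER _; apply: ER. Qed.

Lemma E_ideal g : is_ideal (E g).
Proof. by case: action => _ [ideal _]. Qed.

Lemma E0 g : E g 0.
Proof. by case: (E_ideal g). Qed.

Lemma E_sub g u v : E g u -> E g v -> E g (u - v).
Proof. by case: (E_ideal g) => _ subE _; apply: subE. Qed.

Lemma E_mull g u v : E g u -> E g (v * u).
Proof. by case: (E_ideal g) => _ _ mulE /(mulE v) []. Qed.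

Lemma E_mulr g u v : E g u -> E g (u * v).
Proof. by case: (E_ideal g) => _ _ mulE /(mulE v) []. Qed.

Lemma E_add g u v : E g u -> E g v -> E g (u + v).
Proof.
move=> Eu Ev; rewrite -[v]opprK -[- v]sub0r.
by apply: E_sub Eu (E_sub (E0 g) Ev).
Qed.

Lemma E_eqr g g' u : r g = r g' -> E g u -> E g' u.
Proof. by move=> rgg' /(E_r g); rewrite rgg' => /(E_r g'). Qed.

Lemma local_unit g :
  E g (one g) /\ forall u, E g u -> one g * u = u /\ u * one g = u.
Proof. by case: action => _ [_ [unitE _]]. Qed.

Lemma one_in g : E g (one g).
Proof. by case: (local_unit g). Qed.

Lemma one_mul g u : E g u -> one g * u = u.
Proof. by case: (local_unit g) => _ /(_ u) unitE /unitE []. Qed.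

Lemma mul_one g u : E g u -> u * one g = u.
Proof. by case: (local_unit g) => _ /(_ u) unitE /unitE []. Qed.

(* 1_g only depends on the range of g, since E_g = E_(r g). *)
Lemma one_r g : one g = one (r g).
Proof.
have E_rg : E (r g) (one g) by apply/(E_r g); exact: one_in.
rewrite -{1}(one_mul E_rg) mul_one //.
by apply/(E_r g); exact: one_in.
Qed.

Lemma beta_E g u : E (inv g) u -> E g (beta g u).
Proof. by case: action => _ [_ [_ [/(_ g) [betaE _] _]]]; apply: betaE. Qed.

Lemma beta_add g u v :
  E (inv g) u -> E (inv g) v -> beta g (u + v) = beta g u + beta g v.
Proof. by case: action => _ [_ [_ [/(_ g) [_ [addE _]] _]]]; apply: addE. Qed.

Lemma beta_mul g u v :
  E (inv g) u -> E (inv g) v -> beta g (u * v) = beta g u * beta g v.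
Proof. by case: action => _ [_ [_ [/(_ g) [_ [_ [mulE _]]] _]]]; apply: mulE. Qed.

Lemma beta_comp g h u :
  d g = r h -> E (inv h) u -> beta g (beta h u) = beta (mul g h) u.
Proof. by case: action => _ [_ [_ [_ [_ [compE _]]]]]; apply: compE. Qed.

Lemma beta0 g : beta g 0 = 0.
Proof. by apply: (addrI (beta g 0)); rewrite -beta_add ?addr0 //; exact: E0. Qed.

Lemma beta_sum g (I : Type) (s : seq I) (P : pred I) (F : I -> R) :
  (forall i, P i -> E (inv g) (F i)) ->
  beta g (\sum_(i <- s | P i) F i) = \sum_(i <- s | P i) beta g (F i).
Proof.
move=> EF.
suff [] : E (inv g) (\sum_(i <- s | P i) F i) /\
    beta g (\sum_(i <- s | P i) F i) = \sum_(i <- s | P i) beta g (F i) by [].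
apply: (big_ind2 (fun u v => E (inv g) u /\ beta g u = v)).
- by split; [exact: E0 | exact: beta0].
- move=> u1 v1 u2 v2 [Eu1 <-] [Eu2 <-].
  by split; [exact: E_add | exact: beta_add].
- by move=> i Pi; split; [exact: EF |].
Qed.

Lemma E_disjoint e e' z : e \in gid d -> e' \in gid d -> e != e' ->
  E e z -> E e' z -> z = 0.
Proof.
move=> He He' nee' Ez Ez'.
pose f k := if k == e then z else if k == e' then - z else 0.
have Ef k : k \in gid d -> E k (f k).
  move=> _; rewrite /f; case: eqP => [-> //|_].
  case: eqP => [->|_]; last exact: E0.
  by rewrite -sub0r; apply: E_sub (E0 _) Ez'.
have sum_f : \sum_(k in gid d) f k = 0.
  rewrite (bigD1 e) //= (bigD1 e') /=; last by rewrite He' eq_sym.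
  rewrite big1 => [|k /andP [/andP [_ /negPf ke] /negPf ke']]; last first.
    by rewrite /f ke ke'.
  by rewrite /f eqxx eq_sym (negPf nee') eqxx addr0 subrr.
case: action => _ [_ [_ [_ [_ [_ [_ direct]]]]]].
by have := direct f Ef sum_f e He; rewrite /f eqxx.
Qed.

Lemma mul_orth g g' u v : r g != r g' -> E g u -> E g' v -> u * v = 0.
Proof.
move=> ne Eu Ev; apply: (E_disjoint (r_gid groupoidG g) (r_gid groupoidG g') ne).
  by apply/(E_r g); exact: E_mulr.
by apply/(E_r g'); exact: E_mull.
Qed.

Lemma mul_one_if g g' u : E g u -> u * one g' = if r g == r g' then u else 0.
Proof.
move=> Eu; case: eqP => [rgg'|/eqP ne]; first exact/mul_one/(E_eqr rgg').
exact: mul_orth ne Eu (one_in g').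
Qed.

Lemma sum_one : \sum_(e in gid d) one e = 1.
Proof.
case: action => _ [_ [_ [_ [_ [_ [/(_ 1) [f [Ef def1]] _]]]]]].
rewrite [RHS]def1; apply: eq_bigr => e He.
rewrite -[one e]mulr1 def1 mulr_sumr (bigD1 e) //= big1 ?addr0.
  exact: one_mul (Ef e He).
move=> k /andP [Hk ke]; apply: mul_orth (one_in e) (Ef k Hk).
by rewrite (gid_r groupoidG He) (gid_r groupoidG Hk) eq_sym.
Qed.

Lemma J_comm g a u : Jset inv E one beta g a -> u * a = a * beta g (u * one (inv g)).
Proof. by case=> _ /(_ u) ->. Qed.

Definition trace (S : {set G}) (z : R) : R := \sum_(h in S) beta h (z * one (inv h)).

Lemma trace_term_E h z : E h (beta h (z * one (inv h))).
Proof. by apply: beta_E; apply: E_mull; exact: one_in. Qed.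

Lemma trace_one (S : {set G}) z g :
  trace S z * one g = \sum_(h in S | r h == r g) beta h (z * one (inv h)).
Proof.
rewrite /trace mulr_suml big_mkcondr; apply: eq_bigr => h _.
exact: mul_one_if (trace_term_E h z).
Qed.

Lemma beta_comp_term h' h z : r h = d h' ->
  beta h' (beta h (z * one (inv h))) = beta (mul h' h) (z * one (inv (mul h' h))).
Proof.
move=> rh; have dh' : d h' = r h by rewrite rh.
rewrite beta_comp //; last by apply: E_mull; exact: one_in.
by rewrite one_r [one (inv (mul h' h))]one_r !(r_inv groupoidG) (mul_d groupoidG dh').
Qed.

Lemma trace_fixed (S : {set G}) z :
  subgroupoid d r inv mul S -> fixed_ring inv one beta S (trace S z).
Proof.
case=> _ S_inv S_mul h' Sh'.
rewrite !trace_one (r_inv groupoidG) beta_sum; last first.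
  move=> h /andP [_ /eqP rh]; apply: E_eqr (trace_term_E h z).
  by rewrite (r_inv groupoidG).
rewrite (eq_bigr _ (fun h hS => beta_comp_term z (eqP (proj2 (andP hS))))).
rewrite [RHS](reindex_onto (mul h') (mul (inv h'))) /=; last first.
  by move=> k /andP [_ /eqP rk]; exact: (mulKVg groupoidG rk).
apply: eq_bigl => j; apply/andP/andP => [[Sj /eqP rj]|].
  have dj : d h' = r j by rewrite rj.
  by rewrite S_mul // (mul_r groupoidG dj) (mulKg groupoidG dj) !eqxx.
move=> [/andP [Sm /eqP rm] /eqP <-].
have dV : d (inv h') = r (mul h' j) by rewrite (d_inv groupoidG) rm.
by rewrite S_mul ?S_inv // (mul_r groupoidG dV) (r_inv groupoidG).
Qed.

Lemma beta_mul_term l h u w : r h = r l -> E (inv l) u ->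
  beta l u * beta h (w * one (inv h)) =
  beta l (u * beta (mul (inv l) h) (w * one (inv (mul (inv l) h)))).
Proof.
move=> rhl Eu; set k := mul (inv l) h.
have dk : d (inv l) = r h by rewrite (d_inv groupoidG) rhl.
have dlk : d l = r k by rewrite (mul_r groupoidG dk) (r_inv groupoidG).
have one_k : one (inv h) = one (inv k).
  by rewrite one_r [one (inv k)]one_r !(r_inv groupoidG) (mul_d groupoidG dk).
have Ew : E (inv k) (w * one (inv k)) by apply: E_mull; exact: one_in.
rewrite one_k -{1}(mulKVg groupoidG rhl) -/k -(beta_comp dlk Ew) [RHS]beta_mul //.
by apply: (E_eqr _ (trace_term_E k w)); rewrite -dlk (r_inv groupoidG).
Qed.

Section Galois.
Variables (m : nat) (x y : 'I_m -> R).
Hypothesis galois : forall g, \sum_(i < m) x i * beta g (y i * one (inv g)) =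
  (if g \in gid d then one g else 0).

Lemma trace_galois_one (S : {set G}) : gid d \subset S -> \sum_(i < m) x i * trace S (y i) = 1.
Proof.
move=> wideS; rewrite /trace.
under eq_bigr do rewrite mulr_sumr.
rewrite exchange_big /= (eq_bigr _ (fun g _ => galois g)) -big_mkcondr -sum_one.
apply: eq_bigl => h; apply/andP/idP => [[] //|hG].
by split=> //; exact: (subsetP wideS).
Qed.

Lemma trace_galois_vanish (S : {set G}) l : l \notin S ->
  \sum_(i < m) beta l (x i * one (inv l)) * trace S (y i) = 0.
Proof.
move=> nSl; rewrite /trace.
under eq_bigr do rewrite mulr_sumr.
rewrite exchange_big /=; apply: big1 => h Sh.
have [rhl|ne] := eqVneq (r h) (r l); last first.
  by apply: big1 => i _; apply: mul_orth (trace_term_E _ _) (trace_term_E _ _); rewrite eq_sym.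
have E_x i : E (inv l) (x i * one (inv l)) by apply: E_mull; exact: one_in.
rewrite (eq_bigr _ (fun i _ => beta_mul_term (y i) rhl (E_x i))).
set k := mul (inv l) h.
have Ek : forall u, E k u -> E (inv l) u.
  move=> u; apply: E_eqr.
  by rewrite (mul_r groupoidG) ?(r_inv groupoidG) // (d_inv groupoidG) rhl.
rewrite -beta_sum => [|i _]; last by apply: E_mulr; exact: E_x.
rewrite (eq_bigr (fun i => x i * beta k (y i * one (inv k)))) => [|i _]; last first.
  by rewrite -mulrA one_mul //; apply: Ek; exact: trace_term_E.
rewrite galois; case: ifP => [kG|_]; last exact: beta0.
by move: nSl; rewrite -(gid_cancel groupoidG rhl kG) Sh.
Qed.

Lemma fixed_subset (S T : {set G}) :
  subgroupoid d r inv mul S -> gid d \subset S ->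
  (forall t, t \in T -> exists2 a, Jset inv E one beta t a & a <> 0) ->
  (forall a, fixed_ring inv one beta S a -> fixed_ring inv one beta T a) ->
  T \subset S.
Proof.
move=> subS wideS J_T fixST; apply/subsetP => l Tl; apply/negPn/negP => nSl.
have [a Ja] := J_T l Tl; apply.
pose c i := trace S (y i).
have c_fixed i : beta l (c i * one (inv l)) = c i * one l.
  exact: fixST (trace_fixed (y i) subS) l Tl.
have -> : a = a * (\sum_(i < m) beta l (x i * one (inv l)) * c i) * one l.
  rewrite -[LHS]mul1r -(trace_galois_one wideS) mulr_suml mulr_sumr mulr_suml.
  apply: eq_bigr => i _.
  by rewrite -mulrA (J_comm _ Ja) c_fixed mulrA (J_comm _ Ja) !mulrA.
by rewrite trace_galois_vanish // mulr0 mul0r.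
Qed.

End Galois.

End Action.

Unset Implicit Arguments.

Theorem lemma3p2 (K : comPzRingType) (R : algType K) (G : finType)
    (d r inv : G -> G) (mul : G -> G -> G)
    (E : G -> R -> Prop) (one : G -> R) (beta : G -> R -> R)
    (H L : {set G}) :
  is_groupoid d r inv mul ->
  unital_action d r inv mul E one beta ->
  galois_ext d inv one beta ->
  wide_subgroupoid d r inv mul H ->
  wide_subgroupoid d r inv mul L ->
  (forall h, h \in H -> exists2 a, Jset inv E one beta h a & a <> 0) ->
  (forall l, l \in L -> exists2 a, Jset inv E one beta l a & a <> 0) ->
  (forall a, fixed_ring inv one beta H a <-> fixed_ring inv one beta L a) ->
  H = L.
Proof.
move=> groupoidG action [m [x [y galois]]] [subH wideH] [subL wideL] J_H J_L fixHL.
have included := fixed_subset groupoidG action galois.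
apply/eqP; rewrite eqEsubset; apply/andP; split.
- by apply: (included L H subL wideL J_H) => a /fixHL.
- by apply: (included H L subH wideH J_L) => a /fixHL.
Qed.
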